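(* Let $\mu>\nu>0$ and let $(Y_i)_{i\ge0},(e_i)_{i\ge0}$ be sequences with values in $[0,1]$, with $e_0=1/2$, satisfying the decoy-state constraints (DS) for some reals $Q_\mu,Q_\nu,E_\mu,E_\nu$. Let $e_t\in(0,1/2]$ and set $a=1+\log_2(1-e_t)$, $b=\log_2(1-e_t)-\log_2 e_t$. Assume $$(a-b)\frac{\nu}{\mu+\nu}+(b-2a)\ge 0 .$$ Then, with $C_1=\mu^2e^{\nu}Q_\nu-\nu^2e^{\mu}Q_\mu$ and $C_2=\mu^2e^{\nu}E_\nu Q_\nu-\nu^2e^{\mu}E_\mu Q_\mu$, $$Y_1\big[1-h(e_1)\big]\ \ge\ \frac{1}{\mu\nu(\mu-\nu)}\Big[aC_1-bC_2+(a-b)\,\nu\big(\nu e^{\mu}E_\mu Q_\mu-\mu e^{\nu}E_\nu Q_\nu\big)\Big].$$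
   Context: $h(x)=-x\log_2 x-(1-x)\log_2(1-x)$ is the binary entropy function on $[0,1]$ (with $0\log_2 0=0$). For reals $\mu>\nu>0$, the decoy-state constraints (DS) on sequences $(Y_i)_{i\ge0},(e_i)_{i\ge0}$ with values in $[0,1]$ are $$Q_\mu=\sum_{i=0}^\infty \frac{\mu^i e^{-\mu}}{i!}Y_i,\quad Q_\nu=\sum_{i=0}^\infty \frac{\nu^i e^{-\nu}}{i!}Y_i,\quad E_\mu Q_\mu=\sum_{i=0}^\infty \frac{\mu^i e^{-\mu}}{i!}Y_ie_i,\quad E_\nu Q_\nu=\sum_{i=0}^\infty \frac{\nu^i e^{-\nu}}{i!}Y_ie_i.$$ *)

From Stdlib Require Import Reals Arith Factorial.
Open Scope R_scope.

Definition log2 (x : R) : R := ln x / ln 2.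

Definition xlog2x (x : R) : R := if Req_EM_T x 0 then 0 else x * log2 x.
Definition h (x : R) : R := - xlog2x x - xlog2x (1 - x).

Definition poisson (mu : R) (i : nat) : R := mu ^ i * exp (- mu) / INR (fact i).

Definition DS (mu nu Qmu Qnu Emu Enu : R) (Y e : nat -> R) : Prop :=
  infinite_sum (fun i => poisson mu i * Y i) Qmu /\
  infinite_sum (fun i => poisson nu i * Y i) Qnu /\
  infinite_sum (fun i => poisson mu i * Y i * e i) (Emu * Qmu) /\
  infinite_sum (fun i => poisson nu i * Y i * e i) (Enu * Qnu).

From Stdlib Require Import Reals Lra Lia Factorial.
Open Scope R_scope.

(* 1 - h is convex, so it lies above its tangent line a - b x at e_t, and it
   remains to bound Y_1 (a - b e_1) from below. The four decoy-state series are
   combined so that the i = 1 term of the combined series is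
   mu nu (mu - nu) Y_1 (a - b e_1) while every other term is nonpositive: for
   i >= 2 because nu^i <= mu^i and a <= b, for i = 0 because e_0 = 1/2 and by
   the hypothesis on a and b. *)

Lemma ln_le_ln x y : 0 < x -> x <= y -> ln x <= ln y.
Proof.
  intros Hx [Hxy | ->]; [left; apply ln_increasing | right]; auto.
Qed.

Lemma ln_le_sub1 y : 0 < y -> ln y <= y - 1.
Proof.
  intros Hy. pose proof (exp_ineq1_le (ln y)) as H. rewrite exp_ln in H; lra.
Qed.

Lemma ln2_pos : 0 < ln 2.
Proof. pose proof ln_lt_2; lra. Qed.

Lemma one_add_log2 x : 0 < x -> 1 + log2 x = log2 (2 * x).
Proof.
  intros Hx. pose proof ln2_pos. unfold log2.
  rewrite ln_mult by lra. field. lra.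
Qed.

Lemma log2_nonneg y : 1 <= y -> 0 <= log2 y.
Proof.
  intros Hy. pose proof ln2_pos. unfold log2, Rdiv.
  apply Rmult_le_pos; [| left; apply Rinv_0_lt_compat; lra].
  rewrite <- ln_1. apply ln_le_ln; lra.
Qed.

Lemma log2_nonpos y : 0 < y <= 1 -> log2 y <= 0.
Proof.
  intros Hy. pose proof ln2_pos. unfold log2, Rdiv.
  assert (ln y <= 0) by (rewrite <- ln_1; apply ln_le_ln; lra).
  assert (0 < / ln 2) by (apply Rinv_0_lt_compat; lra). nra.
Qed.

(* The tangent line of x ln x at c is x ln c + x - c. *)
Lemma xlog2x_ge_tangent x c : 0 <= x -> 0 < c -> (x * ln c + x - c) / ln 2 <= xlog2x x.
Proof.
  intros Hx Hc. pose proof ln2_pos. unfold xlog2x, log2.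
  destruct (Req_EM_T x 0) as [-> | Hx0].
  - unfold Rdiv. assert (0 < / ln 2) by (apply Rinv_0_lt_compat; lra). nra.
  - replace (x * (ln x / ln 2)) with (x * ln x / ln 2) by (field; lra).
    apply Rmult_le_compat_r; [left; apply Rinv_0_lt_compat; lra |].
    assert (Hcx : ln (c / x) <= c / x - 1).
    { apply ln_le_sub1. apply Rdiv_lt_0_compat; lra. }
    unfold Rdiv in Hcx. rewrite ln_mult, ln_Rinv in Hcx
      by (try apply Rinv_0_lt_compat; lra).
    apply Rmult_le_compat_l with (r := x) in Hcx; [| lra].
    replace (x * (c * / x - 1)) with (c - x) in Hcx by (field; lra). nra.
Qed.

Lemma one_sub_h_ge_tangent x c : 0 <= x <= 1 -> 0 < c < 1 ->
  (1 + log2 (1 - c)) - (log2 (1 - c) - log2 c) * x <= 1 - h x.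
Proof.
  intros Hx Hc. pose proof ln2_pos.
  pose proof (xlog2x_ge_tangent x c ltac:(lra) ltac:(lra)).
  pose proof (xlog2x_ge_tangent (1 - x) (1 - c) ltac:(lra) ltac:(lra)).
  assert ((x * ln c + x - c) / ln 2 + ((1 - x) * ln (1 - c) + (1 - x) - (1 - c)) / ln 2
          = (1 + log2 (1 - c)) - (log2 (1 - c) - log2 c) * x - 1)
    by (unfold log2; field; lra).
  unfold h. lra.
Qed.

Lemma infinite_sum_ext u v l :
  (forall i, u i = v i) -> infinite_sum u l -> infinite_sum v l.
Proof.
  intros Huv. apply Un_cv_ext. intros n. apply sum_eq. auto.
Qed.

Lemma infinite_sum_plus u v lu lv :
  infinite_sum u lu -> infinite_sum v lv -> infinite_sum (fun i => u i + v i) (lu + lv).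
Proof.
  intros Hu Hv. apply (Un_cv_ext (fun n => sum_f_R0 u n + sum_f_R0 v n)).
  - intros n. symmetry. apply sum_plus.
  - apply CV_plus; assumption.
Qed.

Lemma infinite_sum_scal k u l :
  infinite_sum u l -> infinite_sum (fun i => k * u i) (k * l).
Proof.
  intros Hu. apply (Un_cv_ext (fun n => k * sum_f_R0 u n)).
  - intros n. rewrite scal_sum. apply sum_eq. intros. ring.
  - apply (CV_mult (fun _ => k)); auto.
    intros eps Heps. exists 0%nat. intros n _. unfold Rdist.
    replace (k - k) with 0 by ring. rewrite Rabs_R0. lra.
Qed.

Lemma infinite_sum_le_partial_sum t l N :
  infinite_sum t l -> (forall n, (N < n)%nat -> t n <= 0) -> l <= sum_f_R0 t N.
Proof.
  intros Ht Htail.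
  assert (Hmono : forall n, (N <= n)%nat -> sum_f_R0 t n <= sum_f_R0 t N).
  { intros n Hn. induction Hn as [| n Hn IH]; [lra |].
    rewrite tech5. pose proof (Htail (S n) ltac:(lia)). lra. }
  destruct (Rle_or_lt l (sum_f_R0 t N)) as [H | H]; auto.
  destruct (Ht (l - sum_f_R0 t N)) as [M HM]; [lra |].
  specialize (HM (max M N) (Nat.le_max_l _ _)).
  specialize (Hmono (max M N) (Nat.le_max_r _ _)).
  unfold Rdist in HM. apply Rabs_def2 in HM. lra.
Qed.

Lemma poisson_div_exp x i : poisson x i = x ^ i / INR (fact i) / exp x.
Proof.
  unfold poisson. rewrite exp_Ropp. field.
  split; [apply INR_fact_neq_0 | pose proof (exp_pos x); lra].
Qed.

Section DecoyCombination.

Variables mu nu a b : R.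
Variables Y e : nat -> R.

(* The i-th term of the combination
     a mu^2 e^nu Q_nu - a nu^2 e^mu Q_mu
     - (b mu^2 + (a - b) mu nu) e^nu E_nu Q_nu + a nu^2 e^mu E_mu Q_mu
   of the decoy-state series, after cancelling e^mu, e^nu against the
   Poisson weights. *)
Definition decoy_term (i : nat) : R :=
  Y i / INR (fact i) *
  (a * (1 - e i) * (mu ^ 2 * nu ^ i - nu ^ 2 * mu ^ i)
   + (a - b) * e i * mu * nu ^ i * (mu - nu)).

Lemma decoy_term_eq i :
  decoy_term i =
  a * mu ^ 2 * exp nu * (poisson nu i * Y i)
  + - (a * nu ^ 2 * exp mu) * (poisson mu i * Y i)
  + - ((b * mu ^ 2 + (a - b) * mu * nu) * exp nu) * (poisson nu i * Y i * e i)
  + a * nu ^ 2 * exp mu * (poisson mu i * Y i * e i).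
Proof.
  unfold decoy_term. rewrite !poisson_div_exp. field.
  pose proof (exp_pos mu). pose proof (exp_pos nu). pose proof (INR_fact_neq_0 i). lra.
Qed.

Lemma decoy_term_sum Qmu Qnu Emu Enu :
  DS mu nu Qmu Qnu Emu Enu Y e ->
  infinite_sum decoy_term
    (a * (mu ^ 2 * exp nu * Qnu - nu ^ 2 * exp mu * Qmu)
     - b * (mu ^ 2 * exp nu * Enu * Qnu - nu ^ 2 * exp mu * Emu * Qmu)
     + (a - b) * nu * (nu * exp mu * Emu * Qmu - mu * exp nu * Enu * Qnu)).
Proof.
  intros [Hmu [Hnu [HEmu HEnu]]].
  apply infinite_sum_ext with (u := fun i =>
    a * mu ^ 2 * exp nu * (poisson nu i * Y i)
    + - (a * nu ^ 2 * exp mu) * (poisson mu i * Y i)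
    + - ((b * mu ^ 2 + (a - b) * mu * nu) * exp nu) * (poisson nu i * Y i * e i)
    + a * nu ^ 2 * exp mu * (poisson mu i * Y i * e i)).
  { intros i. symmetry. apply decoy_term_eq. }
  match goal with |- infinite_sum _ ?l => replace l with
    (a * mu ^ 2 * exp nu * Qnu + - (a * nu ^ 2 * exp mu) * Qmu
     + - ((b * mu ^ 2 + (a - b) * mu * nu) * exp nu) * (Enu * Qnu)
     + a * nu ^ 2 * exp mu * (Emu * Qmu)) by ring end.
  repeat apply infinite_sum_plus; apply infinite_sum_scal; assumption.
Qed.

Lemma decoy_term_1 : decoy_term 1 = mu * nu * (mu - nu) * (Y 1%nat * (a - b * e 1%nat)).
Proof. unfold decoy_term. simpl. field. Qed.

Lemma decoy_term_0_nonpos :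
  0 < nu < mu -> 0 <= Y 0%nat -> e 0%nat = 1 / 2 ->
  (a - b) * (nu / (mu + nu)) + (b - 2 * a) >= 0 ->
  decoy_term 0 <= 0.
Proof.
  intros Hmn HY0 He0 Hab.
  replace (decoy_term 0)
    with (- (Y 0%nat * (mu - nu) * (mu + nu) / 2 * ((a - b) * (nu / (mu + nu)) + (b - 2 * a)))).
  2:{ unfold decoy_term. rewrite He0. simpl. field. lra. }
  assert (0 <= Y 0%nat * (mu - nu) * (mu + nu) / 2).
  { unfold Rdiv. repeat apply Rmult_le_pos; lra. }
  nra.
Qed.

Lemma decoy_term_tail_nonpos i :
  (2 <= i)%nat -> 0 <= nu <= mu -> 0 <= a <= b -> 0 <= Y i -> 0 <= e i <= 1 ->
  decoy_term i <= 0.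
Proof.
  intros Hi Hmn Hab HY He. unfold decoy_term.
  assert (HD : mu ^ 2 * nu ^ i - nu ^ 2 * mu ^ i <= 0).
  { replace i with (2 + (i - 2))%nat by lia. rewrite !pow_add.
    replace (mu ^ 2 * (nu ^ 2 * nu ^ (i - 2)) - nu ^ 2 * (mu ^ 2 * mu ^ (i - 2)))
      with (- (mu ^ 2 * nu ^ 2 * (mu ^ (i - 2) - nu ^ (i - 2)))) by ring.
    pose proof (pow_incr nu mu (i - 2) Hmn).
    assert (0 <= mu ^ 2 * nu ^ 2) by (apply Rmult_le_pos; apply pow_le; lra). nra. }
  assert (0 <= mu * nu ^ i * (mu - nu)).
  { repeat apply Rmult_le_pos; try apply pow_le; lra. }
  assert (0 <= Y i / INR (fact i)).
  { apply Rmult_le_pos; auto. left. apply Rinv_0_lt_compat, lt_0_INR, lt_O_fact. }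
  assert (0 <= a * (1 - e i)) by (apply Rmult_le_pos; lra).
  assert (0 <= e i * (mu * nu ^ i * (mu - nu))) by (apply Rmult_le_pos; lra).
  assert (a * (1 - e i) * (mu ^ 2 * nu ^ i - nu ^ 2 * mu ^ i)
          + (a - b) * e i * mu * nu ^ i * (mu - nu) <= 0) by nra.
  nra.
Qed.

End DecoyCombination.

Theorem mainTheorem4 (mu nu : R) (Y e : nat -> R) (Qmu Qnu Emu Enu et : R) :
  0 < nu -> nu < mu ->
  (forall i, 0 <= Y i <= 1) -> (forall i, 0 <= e i <= 1) ->
  e 0%nat = 1 / 2 ->
  DS mu nu Qmu Qnu Emu Enu Y e ->
  0 < et <= 1 / 2 ->
  let a := 1 + log2 (1 - et) in
  let b := log2 (1 - et) - log2 et in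
  (a - b) * (nu / (mu + nu)) + (b - 2 * a) >= 0 ->
  let C1 := mu ^ 2 * exp nu * Qnu - nu ^ 2 * exp mu * Qmu in
  let C2 := mu ^ 2 * exp nu * Enu * Qnu - nu ^ 2 * exp mu * Emu * Qmu in
  Y 1%nat * (1 - h (e 1%nat)) >=
    / (mu * nu * (mu - nu)) *
    (a * C1 - b * C2 + (a - b) * nu * (nu * exp mu * Emu * Qmu - mu * exp nu * Enu * Qnu)).
Proof.
  intros Hnu Hmn HY He He0 HDS Het a b Hcond C1 C2.
  assert (Ha : 0 <= a) by (unfold a; rewrite one_add_log2 by lra; apply log2_nonneg; lra).
  assert (Hab : a <= b).
  { assert (a - b = log2 (2 * et)) by (unfold a, b; rewrite <- one_add_log2 by lra; ring).
    assert (log2 (2 * et) <= 0) by (apply log2_nonpos; lra). lra. }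
  pose proof (infinite_sum_le_partial_sum _ _ 1 (decoy_term_sum mu nu a b Y e _ _ _ _ HDS)
    (fun i Hi => decoy_term_tail_nonpos mu nu a b Y e i Hi ltac:(lra) ltac:(lra)
                   (proj1 (HY i)) (He i))) as Hpartial.
  simpl sum_f_R0 in Hpartial. rewrite decoy_term_1 in Hpartial.
  pose proof (decoy_term_0_nonpos mu nu a b Y e ltac:(lra) (proj1 (HY 0%nat)) He0 Hcond).
  pose proof (one_sub_h_ge_tangent (e 1%nat) et (He 1%nat) ltac:(lra)) as Hent.
  fold a b in Hent.
  assert (HD : 0 < mu * nu * (mu - nu)) by (repeat apply Rmult_lt_0_compat; lra).
  apply Rle_ge, Rle_trans with (Y 1%nat * (a - b * e 1%nat)).
  - apply Rmult_le_reg_l with (mu * nu * (mu - nu)); auto.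
    rewrite <- Rmult_assoc, Rinv_r, Rmult_1_l by lra. unfold C1, C2. lra.
  - apply Rmult_le_compat_l; [apply HY | lra].
Qed.
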